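(* Let $c,d\in\mathbb{R}^n$ be distinct nonzero vectors such that the line segment $[c,d]$ does not contain $0$. Run the following iteration: if $c^Td>0$, terminate (declaring $0\notin[c,d]$); otherwise set $e=c-d$, $\beta=c^Te$, $d_+=d-(c^Td)\big(\frac{e}{\beta}-\frac{c}{\|c\|\sqrt\beta}\big)$, $c_+=c-(c^Tc)\big(\frac{e}{\beta}-\frac{c}{\|c\|\sqrt\beta}\big)$, then replace $c$ by $d_+$ and $d$ by $c_+$, and repeat. Then the iteration terminates (with the correct declaration $0\notin[c,d]$) after a number of iterations not exceeding $$\frac{\|c-d\|^4}{\|c\|^2\|d\|^2-(c^Td)^2},$$ where $c,d$ here denote the original vectors.
   Context: $[c,d]$ denotes the closed line segment joining $c$ and $d$; $\|\cdot\|$ is the Euclidean norm. *)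

From HB Require Import structures.
From mathcomp Require Import all_boot all_order all_algebra.
From mathcomp Require Import reals.
Set Implicit Arguments. Unset Strict Implicit. Unset Printing Implicit Defensive.
Import Order.TTheory GRing.Theory Num.Theory.
Local Open Scope ring_scope.

Definition dotv (R : realType) (n : nat) (u v : 'rV[R]_n) : R :=
  \sum_(i < n) u 0 i * v 0 i.

Definition normv (R : realType) (n : nat) (u : 'rV[R]_n) : R :=
  Num.sqrt (dotv u u).

Definition iter_step (R : realType) (n : nat) (p : 'rV[R]_n * 'rV[R]_n)
  : 'rV[R]_n * 'rV[R]_n :=
  let c := p.1 in
  let d := p.2 in
  let e := c - d in
  let beta := dotv c e in
  let w := beta^-1 *: e - (normv c * Num.sqrt beta)^-1 *: c in
  let dplus := d - dotv c d *: w in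
  let cplus := c - dotv c c *: w in
  (dplus, cplus).

Definition iterate (R : realType) (n : nat) (c d : 'rV[R]_n) (k : nat) :=
  iter k (@iter_step R n) (c, d).

Definition zero_in_segment (R : realType) (n : nat) (c d : 'rV[R]_n) : Prop :=
  exists t : R, 0 <= t <= 1 /\ (1 - t) *: c + t *: d = 0.

(* The potential [|c - d|^4 / G], with [G = |c|^2 |d|^2 - (c^T d)^2] the Gram
   determinant of [c, d], drops by at least one at every step taken while
   [c^T d <= 0].  Writing [a = |c|^2], [p = c^T d], a step maps [(c, d)] to two
   vectors of span{c, d} whose difference is [-(sqrt (a - p) / sqrt a) c]; hence
   the new squared distance is [a - p] and the Gram determinant is multiplied by
   [a / (a - p)] (the square of the determinant of the change of coordinates).
   The new potential is thus [(a - p)^3 / (a G)], and the decrease by one is an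
   inequality between [a], [b = |d|^2] and [p] that uses [p <= 0] and
   Cauchy-Schwarz [p^2 < a b].  The Gram determinant is positive at the start
   because [G = 0] together with [p <= 0] puts [0] on the segment, via
   [|-p c + a d|^2 = a G].  Since the potential stays nonnegative, the first
   index with [c^T d > 0] is at most the initial potential. *)

From mathcomp Require Import all_boot all_order all_algebra.
From mathcomp Require Import reals.
From mathcomp Require Import ring lra.
Import Order.TTheory GRing.Theory Num.Theory.
Set Implicit Arguments. Unset Strict Implicit. Unset Printing Implicit Defensive.
Local Open Scope ring_scope.

Definition gram (R : realType) (n : nat) (c d : 'rV[R]_n) : R :=
  dotv c c * dotv d d - dotv c d ^+ 2.

Definition potential (R : realType) (n : nat) (c d : 'rV[R]_n) : R :=
  dotv (c - d) (c - d) ^+ 2 / gram c d.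

Section InnerProduct.
Variables (R : realType) (n : nat).
Implicit Types (u v w c d : 'rV[R]_n).

Lemma dotv_comb c d (x1 y1 x2 y2 : R) :
  dotv (x1 *: c + y1 *: d) (x2 *: c + y2 *: d) =
  x1 * x2 * dotv c c + (x1 * y2 + y1 * x2) * dotv c d + y1 * y2 * dotv d d.
Proof.
rewrite /dotv !mulr_sumr -!big_split /=; apply: eq_bigr => i _; rewrite !mxE; ring.
Qed.

Lemma dotvBr u v w : dotv u (v - w) = dotv u v - dotv u w.
Proof. by rewrite /dotv -sumrB; apply: eq_bigr => i _; rewrite !mxE mulrBr. Qed.

Lemma dotv_selfB c d : dotv (c - d) (c - d) = dotv c c + dotv d d - 2 * dotv c d.
Proof.
have -> : c - d = 1 *: c + (-1) *: d by rewrite scale1r scaleN1r.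
rewrite dotv_comb; ring.
Qed.

Lemma dotv0l v : dotv 0 v = 0.
Proof. by rewrite /dotv big1 // => i _; rewrite mxE mul0r. Qed.

Lemma dotv_ge0 u : 0 <= dotv u u.
Proof. by apply: sumr_ge0 => i _; rewrite -expr2 sqr_ge0. Qed.

Lemma dotv_eq0 u : (dotv u u == 0) = (u == 0).
Proof.
apply/eqP/eqP => [u0|->]; last exact: dotv0l.
apply/rowP => i; rewrite mxE; apply/eqP; rewrite -sqrf_eq0 expr2; apply/eqP.
by move: u0 => /psumr_eq0P; apply=> // j _; rewrite -expr2 sqr_ge0.
Qed.

Lemma dotv_gt0 u : u != 0 -> 0 < dotv u u.
Proof. by rewrite lt0r dotv_ge0 andbT dotv_eq0. Qed.

Lemma normv_sqr u : normv u ^+ 2 = dotv u u.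
Proof. by rewrite sqr_sqrtr // dotv_ge0. Qed.

Lemma gram_comb c d (x1 y1 x2 y2 : R) :
  gram (x1 *: c + y1 *: d) (x2 *: c + y2 *: d) = (x1 * y2 - y1 * x2) ^+ 2 * gram c d.
Proof. by rewrite /gram !dotv_comb; ring. Qed.

Lemma dotv_gram c d :
  dotv ((- dotv c d) *: c + dotv c c *: d) ((- dotv c d) *: c + dotv c c *: d) =
  dotv c c * gram c d.
Proof. by rewrite dotv_comb /gram; ring. Qed.

Lemma gram_ge0 c d : 0 <= gram c d.
Proof.
have [c0|c0] := eqVneq c 0.
  by rewrite /gram c0 !dotv0l mul0r expr0n subrr.
by rewrite -(pmulr_rge0 _ (dotv_gt0 c0)) -dotv_gram dotv_ge0.
Qed.

Lemma potential_ge0 c d : 0 <= potential c d.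
Proof. by rewrite divr_ge0 ?sqr_ge0 ?gram_ge0. Qed.

Lemma gram_gt0_dotv_gt0 c d : 0 < gram c d -> 0 < dotv c c.
Proof.
move=> G_gt0; rewrite dotv_gt0 //; apply: contraTneq G_gt0 => ->.
by rewrite /gram !dotv0l mul0r expr0n subrr ltxx.
Qed.

Lemma gram_gt0 c d :
  c != 0 -> dotv c d <= 0 -> ~ zero_in_segment c d -> 0 < gram c d.
Proof.
move=> c_neq0 cd_le0 not_seg; rewrite lt0r gram_ge0 andbT; apply/eqP => G0.
apply: not_seg; have c_gt0 := dotv_gt0 c_neq0.
have ap_gt0 : 0 < dotv c c - dotv c d by lra.
have comb0 : (- dotv c d) *: c + dotv c c *: d = 0.
  by apply/eqP; rewrite -dotv_eq0 dotv_gram G0 mulr0.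
exists (dotv c c / (dotv c c - dotv c d)); split.
  by apply/andP; split; [rewrite divr_ge0 //; lra | rewrite ler_pdivrMr //; lra].
have -> : (1 - dotv c c / (dotv c c - dotv c d)) *: c +
          (dotv c c / (dotv c c - dotv c d)) *: d =
          (dotv c c - dotv c d)^-1 *: ((- dotv c d) *: c + dotv c c *: d).
  by apply/rowP => i; rewrite !mxE; field; rewrite gt_eqF.
by rewrite comb0 scaler0.
Qed.

End InnerProduct.

Lemma potential_step_ineq (F : realFieldType) (a b p : F) :
  0 < a -> p <= 0 -> 0 < a * b - p ^+ 2 ->
  (a - p) ^+ 2 / (a / (a - p) * (a * b - p ^+ 2)) <=
  (a + b - 2 * p) ^+ 2 / (a * b - p ^+ 2) - 1.
Proof.
(* With [q = -p >= 0] the cleared inequality reads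
   [a ((a + b + 2q)^2 - G) - (a + q)^3 = q G + a (b^2 + ab + aq + 3bq + 2q^2) >= 0]. *)
move=> a_gt0 p_le0 G_gt0; set G := a * b - p ^+ 2 in G_gt0 *.
have ap_gt0 : 0 < a - p by lra.
have -> : (a - p) ^+ 2 / (a / (a - p) * G) = (a - p) ^+ 3 / a / G.
  by field; rewrite !gt_eqF.
have -> : (a + b - 2 * p) ^+ 2 / G - 1 = ((a + b - 2 * p) ^+ 2 - G) / G.
  by field; rewrite gt_eqF.
rewrite ler_pM2r ?invr_gt0 // ler_pdivrMr //.
have b_gt0 : 0 < b.
  by rewrite -(pmulr_rgt0 _ a_gt0); move: G_gt0 (sqr_ge0 p); rewrite /G; lra.
have : 0 <= - p * G by apply: mulr_ge0; lra.
rewrite /G; nra.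
Qed.

Section Step.
Variables (R : realType) (n : nat) (c d : 'rV[R]_n).
Hypotheses (c_gt0 : 0 < dotv c c) (cd_le0 : dotv c d <= 0).

Local Notation a := (dotv c c).
Local Notation p := (dotv c d).
Local Notation r := (Num.sqrt (dotv c c)).
Local Notation s := (Num.sqrt (dotv c c - dotv c d)).

Let ap_gt0 : 0 < a - p. Proof. by rewrite subr_gt0 (le_lt_trans cd_le0). Qed.
Let r_gt0 : 0 < r. Proof. by rewrite sqrtr_gt0. Qed.
Let s_gt0 : 0 < s. Proof. by rewrite sqrtr_gt0. Qed.
Let r_sqr : r ^+ 2 = a. Proof. by rewrite sqr_sqrtr // ltW. Qed.
Let s_sqr : s ^+ 2 = a - p. Proof. by rewrite sqr_sqrtr // ltW. Qed.

Let alpha := (a - p)^-1 - (r * s)^-1.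
Let gamma := - (a - p)^-1.

Lemma iter_stepE : iter_step (c, d) =
  ((- p * alpha) *: c + (1 - p * gamma) *: d, (1 - a * alpha) *: c + (- a * gamma) *: d).
Proof.
rewrite /iter_step /normv /= dotvBr.
by congr pair; apply/rowP => i; rewrite !mxE /alpha /gamma; ring.
Qed.

(* Once [a = r^2] and [a - p = s^2] are substituted, the identities below are
   rational in [r] and [s]; generalizing [r] and [s] keeps [rewrite] from
   reaching under the square roots. *)
Lemma gram_iter_step :
  gram (iter_step (c, d)).1 (iter_step (c, d)).2 = a / (a - p) * gram c d.
Proof.
rewrite iter_stepE gram_comb; congr (_ * _); rewrite /alpha /gamma.
move: r_gt0 s_gt0 r_sqr s_sqr; generalize r s => r' s' r0 s0 r2 s2.
rewrite -s2; have -> : p = r' ^+ 2 - s' ^+ 2 by rewrite r2 s2; ring.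
by rewrite -r2; field; rewrite !gt_eqF.
Qed.

Lemma dist_iter_step :
  dotv ((iter_step (c, d)).1 - (iter_step (c, d)).2)
       ((iter_step (c, d)).1 - (iter_step (c, d)).2) = a - p.
Proof.
rewrite iter_stepE /= opprD addrACA -!scalerBl dotv_comb /alpha /gamma.
move: r_gt0 s_gt0 r_sqr s_sqr; generalize r s => r' s' r0 s0 r2 s2.
rewrite -s2; have -> : p = r' ^+ 2 - s' ^+ 2 by rewrite r2 s2; ring.
by rewrite -r2; field; rewrite !gt_eqF.
Qed.

Lemma gram_iter_step_gt0 : 0 < gram c d ->
  0 < gram (iter_step (c, d)).1 (iter_step (c, d)).2.
Proof. by move=> G_gt0; rewrite gram_iter_step !mulr_gt0 ?invr_gt0. Qed.

Lemma potential_iter_step : 0 < gram c d ->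
  potential (iter_step (c, d)).1 (iter_step (c, d)).2 <= potential c d - 1.
Proof.
move=> G_gt0; rewrite /potential dist_iter_step gram_iter_step dotv_selfB.
exact: potential_step_ineq.
Qed.

End Step.

Lemma iterate_potential (R : realType) (n : nat) (c d : 'rV[R]_n) (m : nat) : 0 < gram c d ->
  (forall j, (j < m)%N -> dotv (iterate c d j).1 (iterate c d j).2 <= 0) ->
  0 < gram (iterate c d m).1 (iterate c d m).2 /\
  m%:R <= potential c d - potential (iterate c d m).1 (iterate c d m).2.
Proof.
move=> G_gt0; elim: m => [|m IH] le0; first by rewrite subrr.
have [Gm_gt0 Pm] := IH (fun j jm => le0 j (ltnW jm)).
have := le0 m (ltnSn m); rewrite /iterate iterS -/(iterate c d m) -natr1.
case: (iterate c d m) Gm_gt0 Pm => c' d' /= Gm_gt0 Pm pm_le0.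
have c'_gt0 := gram_gt0_dotv_gt0 Gm_gt0.
have := potential_iter_step c'_gt0 pm_le0 Gm_gt0.
by split; [exact: gram_iter_step_gt0 | lra].
Qed.

Lemma ex_minn_bounded (F : archiFieldType) (P : pred nat) (B : F) :
  (forall m, (forall j, (j < m)%N -> ~~ P j) -> m%:R <= B) ->
  exists k, [/\ k%:R <= B, P k & forall j, (j < k)%N -> ~~ P j].
Proof.
move=> bounded.
have B_ge0 : 0 <= B by apply: (bounded 0%N).
have exP : exists k, P k.
  have [/hasP[k _ Pk] | /hasPn noP] := boolP (has P (iota 0 (Num.bound B))).
    by exists k.
  have := archi_boundP B_ge0; rewrite ltNge => /negP[]; apply: bounded => j jB.
  by apply: noP; rewrite mem_iota.
case: (ex_minnP exP) => k Pk k_min.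
have before : forall j, (j < k)%N -> ~~ P j.
  by move=> j jk; apply/negP => /k_min; rewrite leqNgt jk.
by exists k; split => //; apply: bounded.
Qed.

Theorem mainTheorem11 (R : realType) (n : nat) (c d : 'rV[R]_n)
  (hc : c != 0) (hd : d != 0) (hcd : c != d)
  (hseg : ~ zero_in_segment c d) :
  exists k : nat,
    [/\ (k%:R <= normv (c - d) ^+ 4 /
                 (normv c ^+ 2 * normv d ^+ 2 - dotv c d ^+ 2)),
        0 < dotv (iterate c d k).1 (iterate c d k).2
      & forall j : nat, (j < k)%N ->
          dotv (iterate c d j).1 (iterate c d j).2 <= 0].
Proof.
have -> : normv (c - d) ^+ 4 / (normv c ^+ 2 * normv d ^+ 2 - dotv c d ^+ 2) =
          potential c d by rewrite (exprM _ 2 2) !normv_sqr.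
pose hit k := 0 < dotv (iterate c d k).1 (iterate c d k).2.
have [|k [k_le hit_k before]] := @ex_minn_bounded _ hit (potential c d).
  case=> [_|m le0]; first exact: potential_ge0.
  have G_gt0 : 0 < gram c d.
    by apply: gram_gt0 => //; have := le0 0%N isT; rewrite -leNgt.
  have [j /le0|_] := iterate_potential (m := m.+1) G_gt0; first by rewrite -leNgt.
  have := potential_ge0 (iterate c d m.+1).1 (iterate c d m.+1).2; lra.
by exists k; split => // j /before; rewrite -leNgt.
Qed.
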